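(* Let $N\in\mathbb{N}$, $0\le\mu<L<\infty$, and let $M$ be a method which, for coefficients $\{\alpha_{i,j}\}_{i=1,\dots,N;\,j=0,\dots,i-1}$, generates iterates satisfying $w_k-w_\star=(w_0-w_\star)(1-\frac{\mu}{L}\sum_{i=0}^{k-1}\alpha_{k,i})-\sum_{i=0}^{k-1}\frac{\alpha_{k,i}}{L}\nabla\tilde f(w_i)$, $k=1,\dots,N$, where $\tilde f(x)=f(x)-\frac\mu2\|x-w_\star\|^2$. For any $d\in\mathbb{N}$, $w_0\in\mathbb{R}^d$, $f\in\mathcal{F}_{\mu,L}(\mathbb{R}^d)$, $w_\star\in\arg\min_w f(w)$ and $w_N$ the output of $M$ on $f$ from $w_0$, it holds that $\|w_N-w_\star\|^2\le \mathrm{UB}_{\mu,L}(\{\alpha_{i,j}\})\,\|w_0-w_\star\|^2$, with $\mathrm{UB}_{\mu,L}$ as defined in the context.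
   Context: $\mathcal{F}_{\mu,L}(\mathbb{R}^d)$ denotes the set of proper closed convex functions $f:\mathbb{R}^d\to\mathbb{R}$ such that for all $x,y$: $f(x)\le f(y)+\langle\nabla f(y);x-y\rangle+\frac L2\|x-y\|^2$ and $f(x)\ge f(y)+\langle\nabla f(y);x-y\rangle+\frac\mu2\|x-y\|^2$. Let $e_i$ denote unit vectors; set $\mathbf{w}_0=e_1\in\mathbb{R}^{N+1}$, $\mathbf{g}_i=e_{i+2}\in\mathbb{R}^{N+1}$, $\mathbf{f}_i=e_{i+1}\in\mathbb{R}^N$ ($i=0,\dots,N-1$), and $\mathbf{w}_k=\mathbf{w}_0(1-\frac{\mu}{L}\sum_{i=0}^{k-1}\alpha_{k,i})-\sum_{i=0}^{k-1}\frac{\alpha_{k,i}}{L}\mathbf{g}_i$ for $k=1,\dots,N$. With scalars $\tau$, $\lambda_{i,i+1}$ ($i=0,\dots,N-2$), $\lambda_{\star,i}$ ($i=0,\dots,N-1$), $\lambda_{N-1,\star}$, define the symmetric matrix $S=\tau\mathbf{w}_0\mathbf{w}_0^\top-\mathbf{w}_N\mathbf{w}_N^\top+\frac{\lambda_{N-1,\star}}{2(L-\mu)}\mathbf{g}_{N-1}\mathbf{g}_{N-1}^\top+\sum_{i=0}^{N-1}\frac{\lambda_{\star,i}}{2}\big(-\mathbf{g}_i\mathbf{w}_i^\top-\mathbf{w}_i\mathbf{g}_i^\top+\frac{1}{L-\mu}\mathbf{g}_i\mathbf{g}_i^\top\big)+\sum_{i=0}^{N-2}\frac{\lambda_{i,i+1}}{2}\big(\mathbf{g}_{i+1}(\mathbf{w}_i-\mathbf{w}_{i+1})^\top+(\mathbf{w}_i-\mathbf{w}_{i+1})\mathbf{g}_{i+1}^\top+\frac{1}{L-\mu}(\mathbf{g}_i-\mathbf{g}_{i+1})(\mathbf{g}_i-\mathbf{g}_{i+1})^\top\big)$.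 $\mathrm{UB}_{\mu,L}(\{\alpha_{i,j}\})$ is the optimal value of: minimize $\tau$ over $\tau$ and all $\lambda$'s $\ge0$ subject to $S\succeq0$ and $\sum_{i=0}^{N-2}\lambda_{i,i+1}(\mathbf{f}_{i+1}-\mathbf{f}_i)+\sum_{i=0}^{N-1}\lambda_{\star,i}\mathbf{f}_i-\lambda_{N-1,\star}\mathbf{f}_{N-1}=0$. *)

From HB Require Import structures.
From mathcomp Require Import all_boot all_order all_algebra.
From mathcomp Require Import all_classical all_reals all_analysis.
Set Implicit Arguments. Unset Strict Implicit. Unset Printing Implicit Defensive.
Import Order.TTheory GRing.Theory Num.Theory.
Import numFieldNormedType.Exports.
Local Open Scope classical_set_scope.
Local Open Scope ring_scope.

Definition dotp (R : realType) (d : nat) (u v : 'rV[R]_d) : R :=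
  \sum_(i < d) u 0 i * v 0 i.

Definition sqnorm (R : realType) (d : nat) (u : 'rV[R]_d) : R := dotp u u.

Definition in_FmuL (R : realType) (d : nat) (mu L : R)
    (f : 'rV[R]_d -> R) (g : 'rV[R]_d -> 'rV[R]_d) : Prop :=
  (forall x, differentiable f x /\ forall h, 'd f x h = dotp (g x) h) /\
  (forall x y, f x <= f y + dotp (g y) (x - y) + L / 2 * sqnorm (x - y)) /\
  (forall x y, f y + dotp (g y) (x - y) + mu / 2 * sqnorm (x - y) <= f x).

(* 0-based unit vector e_(j+1) of R^n (column vector); zero if j >= n *)
Definition ev (R : realType) (n j : nat) : 'cV[R]_n :=
  \col_(r < n) (if (r : nat) == j then 1 else 0).

Definition outer (R : realType) (n : nat) (u v : 'cV[R]_n) : 'M[R]_n :=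
  u *m v^T.

Definition bw0 (R : realType) (N : nat) : 'cV[R]_(N.+1) := ev R N.+1 0.
Definition bg (R : realType) (N i : nat) : 'cV[R]_(N.+1) := ev R N.+1 i.+1.
Definition bf (R : realType) (N i : nat) : 'cV[R]_N := ev R N i.

(* bold w_k (for k = 0 this is w_0 as the sums are empty) *)
Definition bw (R : realType) (N : nat) (mu L : R) (alpha : nat -> nat -> R)
    (k : nat) : 'cV[R]_(N.+1) :=
  (1 - mu / L * \sum_(i < k) alpha k i) *: bw0 R N
  - \sum_(i < k) (alpha k i / L) *: bg R N i.

Definition Smat (R : realType) (N : nat) (mu L : R) (alpha : nat -> nat -> R)
    (tau : R) (lnext lstar : nat -> R) (llast : R) : 'M[R]_(N.+1) :=
  let w := bw N mu L alpha in
  let g := bg R N in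
  tau *: outer (bw0 R N) (bw0 R N) - outer (w N) (w N)
  + (llast / (2 * (L - mu))) *: outer (g N.-1) (g N.-1)
  + \sum_(i < N) (lstar i / 2) *:
      (- outer (g i) (w i) - outer (w i) (g i)
       + (L - mu)^-1 *: outer (g i) (g i))
  + \sum_(i < N.-1) (lnext i / 2) *:
      (outer (g i.+1) (w i - w i.+1) + outer (w i - w i.+1) (g i.+1)
       + (L - mu)^-1 *: outer (g i - g i.+1) (g i - g i.+1)).

Definition psd (R : realType) (n : nat) (A : 'M[R]_n) : Prop :=
  forall x : 'cV[R]_n, 0 <= (x^T *m A *m x) 0 0.

(* tau is feasible: there are multipliers lambda >= 0 with S ⪰ 0 and the
   linear constraint; lnext i = lambda_{i,i+1}, lstar i = lambda_{*,i},
   llast = lambda_{N-1,*}. *)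
Definition UB_feasible (R : realType) (N : nat) (mu L : R)
    (alpha : nat -> nat -> R) (tau : R) : Prop :=
  exists (lnext lstar : nat -> R) (llast : R),
    (forall i, (i < N.-1)%N -> 0 <= lnext i) /\
    (forall i, (i < N)%N -> 0 <= lstar i) /\
    0 <= llast /\
    psd (Smat N mu L alpha tau lnext lstar llast) /\
    \sum_(i < N.-1) lnext i *: (bf R N i.+1 - bf R N i)
      + \sum_(i < N) lstar i *: bf R N i - llast *: bf R N N.-1 = 0.

(* optimal value of the SDP (infimum of feasible tau; +oo if infeasible) *)
Definition UB (R : realType) (N : nat) (mu L : R) (alpha : nat -> nat -> R)
    : \bar R :=
  ereal_inf [set t%:E | t in UB_feasible N mu L alpha].

(* Put ft := f - mu/2 |. - ws|^2: it is convex and (L - mu)-smooth, its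
   gradient gt vanishes at the minimiser ws, and the method is a fixed linear
   recursion in w_0 - ws and the gt w_i.  Each multiplier of the SDP weighs an
   interpolation inequality of ft between two of the points ws, w_0, ...,
   w_(N-1).  On the Gram basis (w_0 - ws, gt w_0, ..., gt w_(N-1)) the quadratic
   form of S is tau |w_0 - ws|^2 - |w_N - ws|^2 plus the gradient parts of these
   weighted inequalities, which are bounded by differences of values of ft; the
   linear constraint makes those values cancel.  Hence S psd gives
   |w_N - ws|^2 <= tau |w_0 - ws|^2 for every feasible tau.  If w_0 = ws the
   iterates stay at ws, which covers an infeasible SDP, where UB = +oo and
   +oo * 0 = 0. *)

From HB Require Import structures.
From mathcomp Require Import all_boot all_order all_algebra.
From mathcomp Require Import all_classical all_reals all_analysis.
From mathcomp Require Import ring lra.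
Import Order.TTheory GRing.Theory Num.Theory.
Import numFieldNormedType.Exports.
Local Open Scope classical_set_scope.
Local Open Scope ring_scope.
Set Implicit Arguments. Unset Strict Implicit.

Section InnerProduct.
Variables (R : realType) (d : nat).
Implicit Types (u v w : 'rV[R]_d).

Lemma dotpC u v : dotp u v = dotp v u.
Proof. by apply: eq_bigr => i _; rewrite mulrC. Qed.

Lemma dotpDl u v w : dotp (u + v) w = dotp u w + dotp v w.
Proof. by rewrite /dotp -big_split; apply: eq_bigr => i _; rewrite mxE mulrDl. Qed.

Lemma dotpZl a u v : dotp (a *: u) v = a * dotp u v.
Proof. by rewrite /dotp mulr_sumr; apply: eq_bigr => i _; rewrite mxE mulrA. Qed.

Lemma dotpNl u v : dotp (- u) v = - dotp u v.
Proof. by rewrite -scaleN1r dotpZl mulN1r. Qed.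

Lemma dotpBl u v w : dotp (u - v) w = dotp u w - dotp v w.
Proof. by rewrite dotpDl dotpNl. Qed.

Lemma dotpDr u v w : dotp u (v + w) = dotp u v + dotp u w.
Proof. by rewrite dotpC dotpDl !(dotpC u). Qed.

Lemma dotpZr a u v : dotp u (a *: v) = a * dotp u v.
Proof. by rewrite dotpC dotpZl dotpC. Qed.

Lemma dotpNr u v : dotp u (- v) = - dotp u v.
Proof. by rewrite dotpC dotpNl dotpC. Qed.

Lemma dotp0l v : dotp 0 v = 0.
Proof. by rewrite /dotp big1 // => i _; rewrite mxE mul0r. Qed.

Lemma sqnorm_ge0 u : 0 <= sqnorm u.
Proof. by rewrite sumr_ge0 // => i _; rewrite -expr2 sqr_ge0. Qed.

Lemma sqnorm_eq0 u : (sqnorm u == 0) = (u == 0).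
Proof.
apply/idP/eqP => [/eqP u0|->]; last by rewrite /sqnorm dotp0l.
have sq_ge0 (j : 'I_d) : true -> 0 <= u 0 j * u 0 j by rewrite -expr2 sqr_ge0.
apply/rowP => i; rewrite mxE.
by move: (psumr_eq0P sq_ge0 u0 (i := i) isT) => /eqP; rewrite mulf_eq0 orbb => /eqP.
Qed.

Lemma sqnormN u : sqnorm (- u) = sqnorm u.
Proof. by rewrite /sqnorm dotpNl dotpNr opprK. Qed.

Lemma sqnormZ a u : sqnorm (a *: u) = a ^+ 2 * sqnorm u.
Proof. by rewrite /sqnorm dotpZl dotpZr mulrA expr2. Qed.

Lemma sqnormD u v : sqnorm (u + v) = sqnorm u + 2 * dotp u v + sqnorm v.
Proof. by rewrite /sqnorm !dotpDl !dotpDr (dotpC v u); ring. Qed.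

End InnerProduct.

Section SmoothConvex.
Variables (R : realType) (d : nat).
Implicit Types (f : 'rV[R]_d -> R) (g : 'rV[R]_d -> 'rV[R]_d).

Definition smooth_bound (l : R) f g := forall x y,
  f x <= f y + dotp (g y) (x - y) + l / 2 * sqnorm (x - y).

Definition strong_convexity_bound (m : R) f g := forall x y,
  f y + dotp (g y) (x - y) + m / 2 * sqnorm (x - y) <= f x.

Lemma smooth_minimizer_grad0 l f g ws : 0 < l -> smooth_bound l f g ->
  (forall x, f ws <= f x) -> g ws = 0.
Proof.
move=> l0 smooth fmin; apply/eqP; rewrite -sqnorm_eq0 eq_le sqnorm_ge0 andbT.
set x := ws - l^-1 *: g ws.
have step : x - ws = - (l^-1 *: g ws) by rewrite /x addrAC subrr add0r.
have := smooth x ws; have := fmin x.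
rewrite step sqnormN sqnormZ dotpNr dotpZr -/(sqnorm _) => le_fx le_fx'.
have : l^-1 / 2 * sqnorm (g ws) <= 0.
  suff -> : l^-1 / 2 * sqnorm (g ws)
    = - (- (l^-1 * sqnorm (g ws)) + l / 2 * (l^-1 ^+ 2 * sqnorm (g ws))) by lra.
  by field; rewrite gt_eqF.
by rewrite pmulr_rle0 // divr_gt0 // invr_gt0.
Qed.

(* Co-coercivity: apply the smoothness bound at y + D/l, D := g x - g y. *)
Lemma smooth_convex_interpolation l f g : 0 < l ->
  smooth_bound l f g -> strong_convexity_bound 0 f g ->
  forall x y, f x + dotp (g x) (y - x) + sqnorm (g x - g y) / (2 * l) <= f y.
Proof.
move=> l0 smooth convex x y.
set D := g x - g y; set z := y + l^-1 *: D.
have := smooth z y; have := convex z x.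
have -> : z - y = l^-1 *: D by rewrite /z addrC addKr.
have -> : z - x = (y - x) + l^-1 *: D by rewrite /z addrAC.
rewrite sqnormZ dotpZr dotpDr dotpZr !mul0r addr0.
have -> : dotp (g x) D = sqnorm D + dotp (g y) D by rewrite /sqnorm {2}/D dotpBl subrK.
have : l / 2 * (l^-1 ^+ 2 * sqnorm D) = sqnorm D / (2 * l) by field; rewrite gt_eqF.
have : l^-1 * sqnorm D = 2 * (sqnorm D / (2 * l)) by field; rewrite gt_eqF.
lra.
Qed.

Definition shift_fun (mu : R) ws f x := f x - mu / 2 * sqnorm (x - ws).
Definition shift_grad (mu : R) ws g x := g x - mu *: (x - ws).

Lemma shift_smooth_convex (mu L : R) ws f g :
  smooth_bound L f g -> strong_convexity_bound mu f g ->
  smooth_bound (L - mu) (shift_fun mu ws f) (shift_grad mu ws g) /\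
  strong_convexity_bound 0 (shift_fun mu ws f) (shift_grad mu ws g).
Proof.
move=> smooth convex.
have gap x y : shift_fun mu ws f x = shift_fun mu ws f y
    + dotp (shift_grad mu ws g y) (x - y)
    + (f x - f y - dotp (g y) (x - y) - mu / 2 * sqnorm (x - y)).
  rewrite /shift_fun /shift_grad.
  have -> : x - ws = (x - y) + (y - ws) by rewrite addrA subrK.
  by rewrite sqnormD (dotpBl (g y)) dotpZl (dotpC (y - ws)); field.
split=> x y; rewrite (gap x y); first by have := smooth x y; lra.
by have := convex x y; have := sqnorm_ge0 (x - y); lra.
Qed.

End SmoothConvex.

Lemma ev_delta_mx {R : realType} n j (hj : (j < n)%N) :
  ev R n j = delta_mx (Ordinal hj) 0.
Proof. by apply/colP => r; rewrite !mxE -val_eqE /= eqxx andbT; case: eqP. Qed.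

Section GramForm.
Variables (R : realType) (n d : nat) (P : 'M[R]_(n, d)).

Definition gram_vec (u : 'cV[R]_n) : 'rV[R]_d := u^T *m P.

Fact gram_vec_is_linear : linear gram_vec.
Proof. by move=> a u v; rewrite /gram_vec linearP /= mulmxDl scalemxAl. Qed.

HB.instance Definition _ :=
  GRing.isLinear.Build R 'cV[R]_n 'rV[R]_d *:%R gram_vec gram_vec_is_linear.

Lemma gram_vec_ev j (hj : (j < n)%N) : gram_vec (ev R n j) = row (Ordinal hj) P.
Proof. by rewrite /gram_vec (ev_delta_mx hj) trmx_delta -rowE. Qed.

Definition gram_form (A : 'M[R]_n) : R :=
  \sum_(c < d) ((col c P)^T *m A *m col c P) 0 0.

Fact gram_form_is_linear : linear_for *%R gram_form.
Proof.
move=> a A B; rewrite /gram_form mulr_sumr -big_split; apply: eq_bigr => c _.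
by rewrite mulmxDr mulmxDl -scalemxAr -scalemxAl 2!mxE.
Qed.

HB.instance Definition _ :=
  GRing.isLinear.Build R 'M[R]_n R *%R gram_form gram_form_is_linear.

Lemma gram_form_ge0 A : psd A -> 0 <= gram_form A.
Proof. by move=> A_psd; rewrite sumr_ge0 // => c _; apply: A_psd. Qed.

Lemma gram_form_outer u v : gram_form (outer u v) = dotp (gram_vec u) (gram_vec v).
Proof.
apply: eq_bigr => c _.
rewrite /outer mulmxA -[_ *m col c P]mulmxA mxE big_ord1 !mxE.
by congr (_ * _); apply: eq_bigr => j _; rewrite !mxE // mulrC.
Qed.

End GramForm.

Lemma fval_combination_eq0 (R : realType) (N : nat) (lnext lstar : nat -> R)
    (llast : R) (F : nat -> R) : (0 < N)%N ->
  \sum_(i < N.-1) lnext i *: (bf R N i.+1 - bf R N i)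
    + \sum_(i < N) lstar i *: bf R N i - llast *: bf R N N.-1 = 0 ->
  \sum_(i < N.-1) lnext i * (F i.+1 - F i) + \sum_(i < N) lstar i * F i
    - llast * F N.-1 = 0.
Proof.
move=> N_gt0 constraint; set Frow := \row_(j < N) F j.
have Frow_bf i : (i < N)%N -> (Frow *m bf R N i) 0 0 = F i.
  by move=> iN; rewrite /bf (ev_delta_mx iN) -colE !mxE.
transitivity ((Frow *m (0 : 'cV[R]_N)) 0 0); last by rewrite mulmx0 mxE.
rewrite -{}constraint mulmxBr mulmxDr !mulmx_sumr -scalemxAr 4!mxE !summxE.
rewrite Frow_bf ?prednK //; congr (_ + _ - _); apply: eq_bigr => i _.
  have iN : (i.+1 < N)%N by rewrite -ltn_predRL.
  rewrite -scalemxAr mxE -(Frow_bf _ iN) -(Frow_bf _ (ltnW iN)).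
  by rewrite mulmxBr !mxE.
by rewrite -scalemxAr mxE Frow_bf.
Qed.

Section FirstOrderMethod.
Variables (R : realType) (N d : nat) (mu L : R) (alpha : nat -> nat -> R).
Variables (ft : 'rV[R]_d -> R) (gt : 'rV[R]_d -> 'rV[R]_d).
Variables (ws : 'rV[R]_d) (w : nat -> 'rV[R]_d).

Hypothesis gt_ws : gt ws = 0.
Hypothesis iterates : forall k, (1 <= k <= N)%N ->
  w k - ws = (1 - mu / L * \sum_(i < k) alpha k i) *: (w 0%N - ws)
             - \sum_(i < k) (alpha k i / L) *: gt (w i).

Lemma iterates_at_minimizer : w 0%N = ws -> forall k, (k <= N)%N -> w k = ws.
Proof.
move=> w0 k; elim/ltn_ind: k => -[|k] IH kN //.
apply/eqP; rewrite -subr_eq0 iterates ?kN // w0 subrr scaler0 sub0r.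
rewrite big1 ?oppr0 // => i _.
by rewrite IH ?gt_ws ?scaler0 // ltnW // (leq_trans (ltn_ord i)).
Qed.

(* Row [0] of [P] represents [w_0 - w_*], row [i+1] the gradient at [w_i],
   so that [gram_vec P] maps the symbolic vectors of the SDP to actual ones. *)
Let p j := if j is i.+1 then gt (w i) else w 0%N - ws.
Let P : 'M[R]_(N.+1, d) := \matrix_(j < N.+1) p j.

Lemma gram_vec_bw0 : gram_vec P (bw0 R N) = w 0%N - ws.
Proof. by rewrite gram_vec_ev rowK. Qed.

Lemma gram_vec_bg i : (i < N)%N -> gram_vec P (bg R N i) = gt (w i).
Proof. by move=> iN; rewrite /bg gram_vec_ev ?rowK. Qed.

Lemma gram_vec_bw k : (k <= N)%N -> gram_vec P (bw N mu L alpha k) = w k - ws.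
Proof.
move=> kN; rewrite linearB linearZ linear_sum /= gram_vec_bw0.
rewrite (eq_bigr (fun i : 'I_k => (alpha k i / L) *: gt (w i))) => [|i _]; last first.
  by rewrite linearZ /= gram_vec_bg // (leq_trans _ kN).
case: k kN => [|k] kN; last by rewrite [RHS]iterates.
by rewrite !big_ord0 mulr0 !subr0 scale1r.
Qed.

Hypothesis mu_lt_L : mu < L.
Hypothesis interpolation : forall x y,
  ft x + dotp (gt x) (y - x) + sqnorm (gt x - gt y) / (2 * (L - mu)) <= ft y.

Let F i := ft (w i) - ft ws.

Let inv_gap_mul s : (L - mu)^-1 * s = 2 * (s / (2 * (L - mu))).
Proof. by field; rewrite subr_eq0 gt_eqF. Qed.

Lemma gram_form_star_le (lstar : nat -> R) :
  (forall i, (i < N)%N -> 0 <= lstar i) ->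
  gram_form P (\sum_(i < N) (lstar i / 2) *:
      (- outer (bg R N i) (bw N mu L alpha i) - outer (bw N mu L alpha i) (bg R N i)
       + (L - mu)^-1 *: outer (bg R N i) (bg R N i)))
  <= - \sum_(i < N) lstar i * F i.
Proof.
move=> lstar_ge0; rewrite linear_sum -sumrN; apply: ler_sum => i _.
have iN := ltn_ord i.
rewrite linearZ /= linearD /= linearD /= linearN /= linearN /= linearZ /=.
rewrite !gram_form_outer gram_vec_bg // gram_vec_bw ?(ltnW iN) // (dotpC (w i - ws)).
have -> : - (lstar i * F i) = lstar i / 2 * (- 2 * F i) by field.
apply: ler_wpM2l; first by rewrite divr_ge0 ?lstar_ge0.
have := interpolation (w i) ws; rewrite gt_ws subr0 -opprB dotpNr /F.
have := inv_gap_mul (sqnorm (gt (w i))); rewrite /sqnorm; lra.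
Qed.

Lemma gram_form_consecutive_le (lnext : nat -> R) :
  (forall i, (i < N.-1)%N -> 0 <= lnext i) ->
  gram_form P (\sum_(i < N.-1) (lnext i / 2) *:
      (outer (bg R N i.+1) (bw N mu L alpha i - bw N mu L alpha i.+1)
       + outer (bw N mu L alpha i - bw N mu L alpha i.+1) (bg R N i.+1)
       + (L - mu)^-1 *: outer (bg R N i - bg R N i.+1) (bg R N i - bg R N i.+1)))
  <= - \sum_(i < N.-1) lnext i * (F i.+1 - F i).
Proof.
move=> lnext_ge0; rewrite linear_sum -sumrN; apply: ler_sum => i _.
have iN : (i.+1 < N)%N by rewrite -ltn_predRL.
rewrite linearZ /= linearD /= linearD /= linearZ /= !gram_form_outer.
rewrite (linearB _ (bw N mu L alpha i)) (linearB _ (bg R N i)) /=.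
rewrite !gram_vec_bg ?(ltnW iN) // !gram_vec_bw ?(ltnW iN) ?(ltnW (ltnW iN)) //.
have -> : (w i - ws) - (w i.+1 - ws) = w i - w i.+1 by rewrite opprB addrA subrK.
rewrite (dotpC (w i - w i.+1)).
have -> : - (lnext i * (F i.+1 - F i)) = lnext i / 2 * (2 * (F i - F i.+1)) by field.
apply: ler_wpM2l; first by rewrite divr_ge0 ?lnext_ge0.
have := interpolation (w i.+1) (w i); rewrite -sqnormN opprB /F.
have := inv_gap_mul (sqnorm (gt (w i) - gt (w i.+1))); rewrite /sqnorm; lra.
Qed.

Lemma final_term_le (llast : R) : 0 <= llast ->
  llast / (2 * (L - mu)) * sqnorm (gt (w N.-1)) <= llast * F N.-1.
Proof.
move=> llast_ge0; rewrite mulrAC -mulrA; apply: ler_wpM2l => //.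
have := interpolation ws (w N.-1).
by rewrite gt_ws dotp0l sub0r sqnormN addr0 lerBrDl /F mulrC.
Qed.

Hypothesis N_gt0 : (0 < N)%N.

Lemma feasible_rate_bound tau : UB_feasible N mu L alpha tau ->
  sqnorm (w N - ws) <= tau * sqnorm (w 0%N - ws).
Proof.
case=> lnext [lstar [llast [lnext_ge0 [lstar_ge0 [llast_ge0 [S_psd constraint]]]]]].
have := gram_form_ge0 P S_psd.
rewrite /Smat /= linearD /= linearD /= linearD /= linearB /= linearZ /= linearZ /=.
rewrite !gram_form_outer gram_vec_bw0 gram_vec_bw // gram_vec_bg ?prednK //.
have := gram_form_star_le lstar_ge0; have := gram_form_consecutive_le lnext_ge0.
have := final_term_le llast_ge0; have := fval_combination_eq0 F N_gt0 constraint.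
rewrite /sqnorm; lra.
Qed.

End FirstOrderMethod.

Lemma lee_ereal_inf_mulr (R : realType) (S : set R) (x c : R) : 0 < c ->
  (forall t, S t -> x <= t * c) ->
  (x%:E <= ereal_inf [set t%:E | t in S] * c%:E)%E.
Proof.
move=> c_gt0 x_le; rewrite -(divfK (lt0r_neq0 c_gt0) x) EFinM.
apply: lee_wpmul2r; first by rewrite lee_fin ltW.
by apply/ereal_infP => _ [t St <-]; rewrite lee_fin ler_pdivrMr // x_le.
Qed.

Theorem lemma5 (R : realType) (N : nat) (mu L : R) (alpha : nat -> nat -> R) :
  (0 < N)%N -> 0 <= mu -> mu < L ->
  forall (d : nat) (f : 'rV[R]_d -> R) (g : 'rV[R]_d -> 'rV[R]_d)
         (ws : 'rV[R]_d) (w : nat -> 'rV[R]_d),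
  in_FmuL mu L f g ->
  (forall x, f ws <= f x) ->
  (forall k, (1 <= k <= N)%N ->
     w k - ws = (1 - mu / L * \sum_(i < k) alpha k i) *: (w 0%N - ws)
                - \sum_(i < k) (alpha k i / L) *: (g (w i) - mu *: (w i - ws))) ->
  ((sqnorm (w N - ws))%:E <= UB N mu L alpha * (sqnorm (w 0%N - ws))%:E)%E.
Proof.
move=> N_gt0 mu_ge0 mu_lt_L d f g ws w [_ [smooth convex]] f_min iterates.
have g_ws : g ws = 0.
  exact: smooth_minimizer_grad0 (le_lt_trans mu_ge0 mu_lt_L) smooth f_min.
have gt_ws : shift_grad mu ws g ws = 0 by rewrite /shift_grad g_ws subrr scaler0 subr0.
have [smooth' convex'] := shift_smooth_convex ws smooth convex.
have L_mu_gt0 : 0 < L - mu by rewrite subr_gt0.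
have interpolation := smooth_convex_interpolation L_mu_gt0 smooth' convex'.
have [w0|w0] := eqVneq (w 0%N) ws.
  rewrite (iterates_at_minimizer gt_ws iterates w0 (leqnn N)) w0 subrr.
  by rewrite /sqnorm dotp0l mule0.
apply: lee_ereal_inf_mulr => [|tau].
  by rewrite lt_def sqnorm_ge0 sqnorm_eq0 subr_eq0 w0.
exact: feasible_rate_bound gt_ws iterates mu_lt_L interpolation N_gt0 tau.
Qed.
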